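(* Let $S=\langle P,\varphi\rangle$ be a SUT model, $t$ a strength and $N\ge 1$ an integer. The propositional formula $Sat_{CCX}^{N,t,S}=X\wedge CCX\wedge SUTX$ (defined in the context) is satisfiable if and only if a covering array $CA(N;t,S)$ exists.
   Context: A SUT model is $S=\langle P,\varphi\rangle$, where $P$ is a finite set of parameters, each $p\in P$ having a finite nonempty domain $d(p)$, and $\varphi$ is a propositional formula whose atoms have the form $(p=v)$ with $p\in P$, $v\in d(p)$. A test case is a full assignment $A$ giving each $p\in P$ a value in $d(p)$ such that $\varphi$ evaluates to true when each atom $(p=v)$ is read as true iff $A(p)=v$; it is assumed that at least one test case exists. Fix a strength $t$ with $1\le t\le |P|$. A $t$-tuple is an assignment of values (from their domains) to exactly $t$ distinct parameters, viewed as a set of pairs $(p,v)$. A test case covers a $t$-tuple $\tau$ if it assigns $v$ to $p$ for every $(p,v)\in\tau$. A $t$-tuple is allowed if some test case covers it; $\mathcal{T}_a$ denotes the set of allowed $t$-tuples. A covering array $CA(N;t,S)$ is a list of $N$ test cases (repetitions allowed) such that every allowed $t$-tuple is covered by at least one of them. Write $[N]=\{1,\dots,N\}$. Propositional variables: $x_{i,p,v}$ for $i\in[N]$, $p\in P$, $v\in d(p)$, and $c^i_\tau$ for $i\in\{0,1,\dots,N\}$, $\tau\in\mathcal T_a$. Constraints (each read as a Boolean constraint; any satisfiability-preserving CNF translation may be used): (X) for every $i\in[N]$ and $p\in P$: exactly one of $\{x_{i,p,v}: v\in d(p)\}$ is true; (SUTX) for every $i\in[N]$: the formula obtained from $\varphi$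 by replacing every atom $(p=v)$ with $x_{i,p,v}$; (CCX) consisting of (a) for every $i\in[N]$, $\tau\in\mathcal T_a$, $(p,v)\in\tau$: $c^i_\tau\rightarrow (c^{i-1}_\tau\vee x_{i,p,v})$; (b) for every $\tau\in\mathcal T_a$ the unit clause $c^N_\tau$; (c) for every $\tau\in\mathcal T_a$: $c^N_\tau\rightarrow\neg c^0_\tau$. *)

From mathcomp Require Import all_boot.
Set Implicit Arguments. Unset Strict Implicit. Unset Printing Implicit Defensive.

Inductive form (A : Type) : Type :=
| FAtom of A
| FTrue
| FFalse
| FNot of form A
| FAnd of form A & form A
| FOr of form A & form A
| FImp of form A & form A.
Arguments FTrue {A}.
Arguments FFalse {A}.

Fixpoint feval (A : Type) (s : A -> bool) (f : form A) : bool :=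
  match f with
  | FAtom a => s a
  | FTrue => true
  | FFalse => false
  | FNot g => ~~ feval s g
  | FAnd g h => feval s g && feval s h
  | FOr g h => feval s g || feval s h
  | FImp g h => feval s g ==> feval s h
  end.

Fixpoint fmap (A B : Type) (m : A -> B) (f : form A) : form B :=
  match f with
  | FAtom a => FAtom (m a)
  | FTrue => FTrue
  | FFalse => FFalse
  | FNot g => FNot (fmap m g)
  | FAnd g h => FAnd (fmap m g) (fmap m h)
  | FOr g h => FOr (fmap m g) (fmap m h)
  | FImp g h => FImp (fmap m g) (fmap m h)
  end.

Definition bigAnd (A : Type) (l : seq (form A)) : form A := foldr (@FAnd A) FTrue l.
Definition bigOr (A : Type) (l : seq (form A)) : form A := foldr (@FOr A) FFalse l.

Definition satisfiable (A : Type) (f : form A) : Prop := exists s : A -> bool, feval s f.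

Section SUT.
(* A SUT model: parameters P (finite), domains D p (finite), constraint phi
   whose atoms (p = v) are the pairs Tagged D v : {p : P & D p}. *)
Variables (P : finType) (D : P -> finType).

Definition pval := {p : P & D p}.
Definition assignment := {dffun forall p : P, D p}.

Definition atom_val (A : assignment) (pv : pval) : bool :=
  pv == Tagged D (A (tag pv)).

Definition is_test (phi : form pval) (A : assignment) : bool :=
  feval (atom_val A) phi.

(* a t-tuple: a set of (p, v) pairs with exactly t distinct parameters,
   one value for each *)
Definition is_ttuple (t : nat) (tau : {set pval}) : bool :=
  (#|tau| == t) && (#|[set tag x | x in tau]| == t).

Definition covers (A : assignment) (tau : {set pval}) : bool :=
  [forall x in tau, atom_val A x].

Definition allowed (phi : form pval) (t : nat) (tau : {set pval}) : bool :=
  is_ttuple t tau && [exists A : assignment, is_test phi A && covers A tau].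

Definition is_CA (phi : form pval) (N t : nat) (ca : seq assignment) : Prop :=
  [/\ size ca = N, all (is_test phi) ca &
      forall tau, allowed phi t tau -> has (fun A => covers A tau) ca].

Inductive var : Type :=
| VX of nat & pval
| VC of nat & {set pval}.

Definition allowed_list (phi : form pval) (t : nat) : seq {set pval} :=
  [seq tau <- enum {set pval} | allowed phi t tau].

Definition X_constr (N : nat) : form var :=
  bigAnd [seq bigAnd
            (bigOr [seq FAtom (VX i (Tagged D v)) | v <- enum (D p)]
             :: [seq FNot (FAnd (FAtom (VX i (Tagged D v)))
                                (FAtom (VX i (Tagged D w))))
                | v <- enum (D p), w <- [seq w <- enum (D p) | w != v]])
         | i <- iota 1 N, p <- enum P].

Definition SUTX_constr (phi : form pval) (N : nat) : form var :=
  bigAnd [seq fmap (fun pv => VX i pv) phi | i <- iota 1 N].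

Definition CCX_constr (phi : form pval) (N t : nat) : form var :=
  FAnd
    (bigAnd (flatten (flatten
       [seq [seq [seq FImp (FAtom (VC i tau))
                           (FOr (FAtom (VC i.-1 tau)) (FAtom (VX i pv)))
                 | pv <- enum tau]
            | tau <- allowed_list phi t]
       | i <- iota 1 N])))
    (FAnd
       (bigAnd [seq FAtom (VC N tau) | tau <- allowed_list phi t])
       (bigAnd [seq FImp (FAtom (VC N tau)) (FNot (FAtom (VC 0 tau)))
               | tau <- allowed_list phi t])).

Definition Sat_CCX (phi : form pval) (N t : nat) : form var :=
  FAnd (X_constr N) (FAnd (CCX_constr phi N t) (SUTX_constr phi N)).

End SUT.

From mathcomp Require Import all_boot.

(* A model of Sat_CCX yields a covering array row by row: (X) makes the
   variables x_{i,p,v} of row i the graph of an assignment, (SUTX) makes it a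
   test case, and for an allowed tau the smallest i with c^i_tau true is
   positive, since c^N_tau holds and c^0_tau fails, so (CCX)(a) forces row i
   to cover tau.  Conversely a covering array ca is encoded by reading
   x_{i,p,v} off its i-th row and setting c^i_tau iff one of the first i rows
   covers tau. *)

Set Implicit Arguments.
Unset Strict Implicit.
Unset Printing Implicit Defensive.

Section FormulaSemantics.

Variables (A : Type) (s : A -> bool).

Lemma feval_bigAnd (l : seq (form A)) : feval s (bigAnd l) = all (feval s) l.
Proof. by elim: l => //= f l ->. Qed.

Lemma feval_bigOr (l : seq (form A)) : feval s (bigOr l) = has (feval s) l.
Proof. by elim: l => //= f l ->. Qed.

Lemma feval_fmap (B : Type) (m : B -> A) (f : form B) :
  feval s (fmap m f) = feval (s \o m) f.
Proof. by elim: f => //= [g -> | g -> h -> | g -> h -> | g -> h ->]. Qed.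

End FormulaSemantics.

Lemma eq_feval (A : Type) (s1 s2 : A -> bool) (f : form A) :
  s1 =1 s2 -> feval s1 f = feval s2 f.
Proof. by move=> e; elim: f => //= [g -> | g -> h -> | g -> h -> | g -> h ->]. Qed.

Lemma all_flatten (T : Type) (a : pred T) (l : seq (seq T)) :
  all a (flatten l) = all (all a) l.
Proof. by elim: l => //= x l <-; rewrite all_cat. Qed.

Lemma mem_iota1 (N i : nat) : (i \in iota 1 N) = (0 < i <= N).
Proof. by rewrite mem_iota add1n ltnS. Qed.

Section Encoding.

Variables (P : finType) (D : P -> finType).
Variables (phi : form (pval D)) (N t : nat).
Implicit Types (s : var D -> bool) (tau : {set pval D}).

Definition row_val s (i : nat) (pv : pval D) : bool := s (VX i pv).

Definition decode_row (A0 : assignment D) s (i : nat) : assignment D :=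
  [ffun p => odflt (A0 p) [pick v | s (VX i (Tagged D v))]].

Definition encode_CA (A0 : assignment D) (ca : seq (assignment D)) (x : var D) :=
  match x with
  | VX i pv => atom_val (nth A0 ca i.-1) pv
  | VC i tau => has (fun A => covers A tau) (take i ca)
  end.

Lemma mem_allowed_list tau : (tau \in allowed_list phi t) = allowed phi t tau.
Proof. by rewrite mem_filter mem_enum andbT. Qed.

Lemma feval_Sat_CCX s :
  feval s (Sat_CCX phi N t) =
  [&& feval s (X_constr D N), feval s (CCX_constr phi N t) & feval s (SUTX_constr phi N)].
Proof. by []. Qed.

Lemma SUTX_constrE s :
  feval s (SUTX_constr phi N) = all (fun i => feval (row_val s i) phi) (iota 1 N).
Proof. by rewrite feval_bigAnd all_map; apply: eq_all => i /=; rewrite feval_fmap. Qed.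

Lemma decode_rowP A0 s (i : nat) (p : P) (v : D p) :
  feval s (X_constr D N) -> i \in iota 1 N ->
  s (VX i (Tagged D v)) = (v == decode_row A0 s i p).
Proof.
rewrite feval_bigAnd => /all_allpairsP HX Hi.
move: (HX i p Hi (mem_enum _ _)); rewrite /= feval_bigOr has_map feval_bigAnd.
move=> /andP[/hasP[v0 _ Hv0] /all_allpairsP Huniq].
rewrite ffunE; case: pickP => [u Hu | Hnone] /=; last by move: (Hnone v0) Hv0 => /= ->.
case: (eqVneq v u) => [-> // | Hvu]; apply/negbTE/negP => Hv.
have := Huniq u v (mem_enum _ _); rewrite mem_filter Hvu mem_enum /=.
by rewrite Hu Hv => /(_ isT).
Qed.

Lemma atom_val_decode_row A0 s (i : nat) :
  feval s (X_constr D N) -> i \in iota 1 N ->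
  atom_val (decode_row A0 s i) =1 row_val s i.
Proof.
by move=> HX Hi [p v]; rewrite /row_val (decode_rowP A0 v HX Hi) /atom_val eq_Tagged.
Qed.

Lemma X_constr_of_rows s (row : nat -> assignment D) :
  (forall i pv, s (VX i pv) = atom_val (row i) pv) -> feval s (X_constr D N).
Proof.
move=> Hrow; rewrite feval_bigAnd; apply/all_allpairsP => i p _ _ /=.
rewrite feval_bigOr feval_bigAnd has_map; apply/andP; split.
  by apply/hasP; exists (row i p); rewrite ?mem_enum //= Hrow /atom_val.
apply/all_allpairsP => v w _; rewrite mem_filter => /andP[Hwv _] /=.
rewrite !Hrow /atom_val !eq_Tagged /=; apply/negP => /andP[/eqP Hv /eqP Hw].
by rewrite Hv Hw eqxx in Hwv.
Qed.

Lemma CCX_constr_covers s tau :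
  feval s (CCX_constr phi N t) -> allowed phi t tau ->
  exists2 i, i \in iota 1 N & {in tau, forall pv, s (VX i pv)}.
Proof.
rewrite /= !feval_bigAnd => /and3P[Hchain Hlast Hfirst].
rewrite -mem_allowed_list => Htau.
have cN : s (VC N tau) by move: Hlast; rewrite all_map => /allP/(_ tau Htau).
have c0 : ~~ s (VC 0 tau).
  by move: Hfirst; rewrite all_map => /allP/(_ tau Htau); rewrite /= cN.
have [i ci imin] := ex_minnP (ex_intro (fun n => s (VC n tau)) N cN).
have i_pos : 0 < i by case: i ci {imin} => //; rewrite (negbTE c0).
have ci1 : ~~ s (VC i.-1 tau).
  by apply/negP => /imin; rewrite leqNgt ltn_predL i_pos.
have Hi : i \in iota 1 N by rewrite mem_iota1 i_pos imin.
exists i => // pv Hpv.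
move: Hchain; rewrite all_flatten => /all_allpairsP/(_ i tau Hi Htau).
by rewrite all_map => /allP/(_ pv); rewrite mem_enum /= ci (negbTE ci1); apply.
Qed.

Lemma CCX_constr_encode A0 (ca : seq (assignment D)) :
  size ca = N -> (forall tau, allowed phi t tau -> has (fun A => covers A tau) ca) ->
  feval (encode_CA A0 ca) (CCX_constr phi N t).
Proof.
move=> Hsz Hcov; rewrite /= !feval_bigAnd; apply/and3P; split.
- rewrite all_flatten; apply/all_allpairsP => i tau; rewrite mem_iota1.
  case: i => // i /= HiN _; rewrite all_map; apply/allP => pv; rewrite mem_enum => Hpv /=.
  apply/implyP; rewrite (take_nth A0) ?Hsz // has_rcons.
  by case/orP=> [/forallP/(_ pv)/implyP/(_ Hpv) -> | ->]; rewrite ?orbT.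
- rewrite all_map; apply/allP => tau; rewrite mem_allowed_list => Htau /=.
  by rewrite -Hsz take_size Hcov.
- by rewrite all_map; apply/allP => tau _ /=; rewrite take0 implybT.
Qed.

Lemma decode_CA_is_CA A0 s :
  feval s (Sat_CCX phi N t) -> is_CA phi N t (map (decode_row A0 s) (iota 1 N)).
Proof.
rewrite feval_Sat_CCX => /and3P[HX HCCX HSUTX].
have Hrow i : i \in iota 1 N -> atom_val (decode_row A0 s i) =1 row_val s i.
  exact: atom_val_decode_row.
split; first by rewrite size_map size_iota.
  rewrite all_map; apply/allP => i Hi /=; rewrite /is_test (eq_feval _ (Hrow i Hi)).
  by move: HSUTX; rewrite SUTX_constrE => /allP/(_ i Hi).
move=> tau /(CCX_constr_covers HCCX)[i Hi Hcov]; rewrite has_map.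
apply/hasP; exists i => //=; apply/forallP => pv; apply/implyP => Hpv.
by rewrite Hrow //; apply: Hcov.
Qed.

Lemma encode_CA_sat A0 (ca : seq (assignment D)) :
  is_CA phi N t ca -> feval (encode_CA A0 ca) (Sat_CCX phi N t).
Proof.
case=> Hsz Hall Hcov; rewrite feval_Sat_CCX; apply/and3P; split.
- exact: (@X_constr_of_rows _ (fun i => nth A0 ca i.-1)).
- exact: CCX_constr_encode.
- rewrite SUTX_constrE; apply/allP => i; rewrite mem_iota1.
  case: i => // i /= HiN; apply: (allP Hall).
  by apply: mem_nth; rewrite Hsz.
Qed.

End Encoding.

Theorem proposition2 (P : finType) (D : P -> finType)
  (phi : form (pval D)) (t N : nat) :
  (forall p : P, 0 < #|D p|) ->
  (exists A : assignment D, is_test phi A) ->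
  1 <= t <= #|P| ->
  1 <= N ->
  satisfiable (Sat_CCX phi N t) <-> exists ca : seq (assignment D), is_CA phi N t ca.
Proof.
(* Only the test case is used, as the default row for [pick] and [nth]. *)
move=> _ [A0 _] _ _; split.
- by case=> s Hs; exists (map (decode_row A0 s) (iota 1 N)); apply: decode_CA_is_CA.
- by case=> ca Hca; exists (encode_CA A0 ca); apply: encode_CA_sat.
Qed.
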